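(* Let $G$ be a connected $2K_2$-free graph containing an induced diamond with vertex set $L_0=\{v_1,v_2,v_3,v_4\}$ and edge set $\{v_1v_2,v_2v_3,v_3v_4,v_4v_1,v_2v_4\}$. Let $L_1$ be the set of vertices of $V(G)\setminus L_0$ having a neighbor in $L_0$, and $L_2=V(G)\setminus(L_0\cup L_1)$. For $i\in\{1,2,3\}$ let $X_i=\{x\in L_1: N(x)\cap L_0=\{v_i\}\}$, and let $Y_1=\{x\in L_1: N(x)\cap L_0=\{v_1,v_2\}\}$, $Y_2=\{x\in L_1: N(x)\cap L_0=\{v_2,v_3\}\}$, $Z_1=\{x\in L_1: N(x)\cap L_0=\{v_1,v_3\}\}$, $Z_2=\{x\in L_1: N(x)\cap L_0=\{v_1,v_2,v_3\}\}$. Then: (1) $V(G)=N(v_4)\cup\{v_4\}\cup X_1\cup X_2\cup X_3\cup Y_1\cup Y_2\cup Z_1\cup Z_2\cup L_2$; (2) $X_1=\emptyset$ or $X_3=\emptyset$; (3) $X_1\cup X_2\cup Y_1$, $Y_2$, $Z_1$ and $L_2$ are independent sets; (4) there are no edges between $X_1\cup X_2\cup X_3\cup Y_1\cup Y_2\cup Z_1$ and $L_2$.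
   Context: All graphs are finite, simple and undirected. $2K_2$ is the disjoint union of two edges; $G$ is $2K_2$-free if it has no induced subgraph isomorphic to $2K_2$. $N(x)$ is the set of neighbors of $x$. A diamond is $K_4$ minus an edge. *)

From mathcomp Require Import all_boot.
Set Implicit Arguments. Unset Strict Implicit. Unset Printing Implicit Defensive.

Definition simple_graph (T : finType) (e : rel T) : Prop :=
  irreflexive e /\ symmetric e.

Definition nbhd (T : finType) (e : rel T) (x : T) : {set T} := [set y | e x y].

Definition connected_graph (T : finType) (e : rel T) : Prop :=
  forall x y : T, connect e x y.

Definition twoK2_free (T : finType) (e : rel T) : Prop :=
  ~ exists a b c d : T,
      [/\ uniq [:: a; b; c; d], e a b, e c d &
          [&& ~~ e a c, ~~ e a d, ~~ e b c & ~~ e b d]].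

Definition independent (T : finType) (e : rel T) (S : {set T}) : Prop :=
  forall x y, x \in S -> y \in S -> ~~ e x y.

Definition induced_diamond (T : finType) (e : rel T) (v1 v2 v3 v4 : T) : Prop :=
  [/\ uniq [:: v1; v2; v3; v4],
      [&& e v1 v2, e v2 v3, e v3 v4, e v4 v1 & e v2 v4] & ~~ e v1 v3].

Section Levels.
Variables (T : finType) (e : rel T) (v1 v2 v3 v4 : T).
Definition L0 : {set T} := [set v1; v2; v3; v4].
Definition L1 : {set T} :=
  [set x | (x \notin L0) && (nbhd e x :&: L0 != set0)].
Definition L2 : {set T} := ~: (L0 :|: L1).
Definition trace (A : {set T}) : {set T} :=
  [set x in L1 | nbhd e x :&: L0 == A].
End Levels.

(* All the independence and
   non-adjacency claims come from one observation: two vertices missing both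
   ends of an edge ab cannot be adjacent, as they would form a 2K2 with ab.
   Each class X1, X2, Y1 misses the edge v3v4, the classes X3 and Y2 miss
   v1v4, Z1 misses v2v4, and L2 misses everything.  Two vertices x in X1 and
   y in X3 would give either a 2K2 {xy, v2v4} or a 2K2 {xv1, yv3}. *)
From Pilot Require Import Defs.
From mathcomp Require Import all_boot.

Set Implicit Arguments.
Unset Strict Implicit.
Unset Printing Implicit Defensive.

Lemma setI1 (T : finType) (S : {set T}) (a : T) :
  S :&: [set a] = if a \in S then [set a] else set0.
Proof.
by case: ifP => aS; apply/setP => v; rewrite !inE; case: eqP => [->|_]; rewrite ?aS ?andbF.
Qed.

Lemma in_nbhd (T : finType) (e : rel T) (x y : T) : (y \in nbhd e x) = e x y.
Proof. by rewrite inE. Qed.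

Section TwoK2Free.
Variables (T : finType) (e : rel T).
Hypotheses (e_irr : irreflexive e) (e_sym : symmetric e) (e_2K2 : twoK2_free e).

Definition misses (x a b : T) : bool := ~~ e x a && ~~ e x b.

Lemma misses_edge_nonadj x y a b :
  e a b -> misses x a b -> misses y a b -> ~~ e x y.
Proof.
move=> eab /andP[nxa nxb] /andP[nya nyb]; apply/negP => exy; apply: e_2K2.
exists x, y, a, b; split => //; last by rewrite nxa nxb nya nyb.
have neq u v : e u v -> u != v by apply: contraTneq => ->; rewrite e_irr.
have neq_miss u v w : e v w -> ~~ e u w -> u != v.
  by move=> evw; apply: contraNneq => ->.
have eba : e b a by rewrite e_sym.
rewrite /= !inE !negb_or neq // (neq_miss _ _ b) // (neq_miss _ _ a) //.
by rewrite (neq_miss _ _ b) // (neq_miss _ _ a) // neq.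
Qed.

Lemma independent_misses_edge (S : {set T}) a b :
  e a b -> {in S, forall x, misses x a b} -> independent e S.
Proof. by move=> eab Smiss x y xS yS; apply: misses_edge_nonadj eab _ _; apply: Smiss. Qed.

End TwoK2Free.

Section Diamond.
Variables (T : finType) (e : rel T) (v1 v2 v3 v4 : T).
Hypotheses (e_irr : irreflexive e) (e_sym : symmetric e) (e_2K2 : twoK2_free e).
Hypotheses (v_uniq : uniq [:: v1; v2; v3; v4])
  (e14 : e v1 v4) (e24 : e v2 v4) (e34 : e v3 v4) (n13 : ~~ e v1 v3).

Local Notation L0 := (Defs.L0 v1 v2 v3 v4).
Local Notation L1 := (Defs.L1 e v1 v2 v3 v4).
Local Notation L2 := (Defs.L2 e v1 v2 v3 v4).
Local Notation tr := (trace e v1 v2 v3 v4).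
Local Notation X1 := (tr [set v1]).
Local Notation X2 := (tr [set v2]).
Local Notation X3 := (tr [set v3]).
Local Notation Y1 := (tr [set v1; v2]).
Local Notation Y2 := (tr [set v2; v3]).
Local Notation Z1 := (tr [set v1; v3]).
Local Notation Z2 := (tr [set v1; v2; v3]).
Local Notation misses_edge_nonadj := (misses_edge_nonadj e_irr e_sym e_2K2).

Lemma diamond_eqF :
  ((v1 == v2) = false) * ((v2 == v1) = false) * ((v1 == v3) = false)
  * ((v3 == v1) = false) * ((v1 == v4) = false) * ((v4 == v1) = false)
  * ((v2 == v3) = false) * ((v3 == v2) = false) * ((v2 == v4) = false)
  * ((v4 == v2) = false) * ((v3 == v4) = false) * ((v4 == v3) = false).
Proof.
move: v_uniq; rewrite /= !inE !negb_or.
move=> /and4P[/and3P[n12 n13' n14] /andP[n23 n24] n34 _].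
by do !split; apply/negbTE; rewrite // eq_sym.
Qed.

Lemma diamond_in_L0 : [/\ v1 \in L0, v2 \in L0, v3 \in L0 & v4 \in L0].
Proof. by split; rewrite !inE eqxx ?orbT. Qed.

Lemma trace0 : tr set0 = set0.
Proof.
apply/setP => x; rewrite in_set0 inE; apply/negP => /andP[].
by rewrite inE => /andP[_ nonempty] /eqP empty; rewrite empty eqxx in nonempty.
Qed.

Lemma trace_nbhd x : x \in L1 -> x \in tr (nbhd e x :&: L0).
Proof. by move=> xL1; rewrite inE xL1 eqxx. Qed.

Lemma trace_adj A x v : x \in tr A -> v \in A -> e x v.
Proof. by rewrite inE => /andP[_ /eqP <-] /setIP[]; rewrite in_nbhd. Qed.

Lemma trace_misses A x a b :
  x \in tr A -> a \in L0 -> b \in L0 -> a \notin A -> b \notin A -> misses e x a b.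
Proof.
rewrite inE => /andP[_ /eqP <-] aL0 bL0.
by rewrite !in_setI aL0 bL0 !andbT !in_nbhd => nxa nxb; apply/andP.
Qed.

Lemma L2_misses y a b : y \in L2 -> a \in L0 -> b \in L0 -> misses e y a b.
Proof.
rewrite in_setC in_setU negb_or => /andP[yL0 yL1] aL0 bL0.
have nadj v : v \in L0 -> ~~ e y v.
  move=> vL0; apply: contra yL1 => eyv; rewrite inE yL0; apply/set0Pn.
  by exists v; rewrite in_setI in_nbhd eyv.
by rewrite /misses !nadj.
Qed.

Ltac diamond_mem := by rewrite !inE ?eqxx ?diamond_eqF ?orbT.

Lemma X1X2Y1_misses34 x : x \in X1 :|: X2 :|: Y1 -> misses e x v3 v4.
Proof. by rewrite !in_setU -orbA => /or3P[] /trace_misses; apply; diamond_mem. Qed.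

Lemma X3_misses14 x : x \in X3 -> misses e x v1 v4.
Proof. by move/trace_misses; apply; diamond_mem. Qed.

Lemma Y2_misses14 x : x \in Y2 -> misses e x v1 v4.
Proof. by move/trace_misses; apply; diamond_mem. Qed.

Lemma Z1_misses24 x : x \in Z1 -> misses e x v2 v4.
Proof. by move/trace_misses; apply; diamond_mem. Qed.

Lemma X1_or_X3_empty : X1 = set0 \/ X3 = set0.
Proof.
have [->|[x xX1]] := set_0Vmem X1; [by left | right].
apply/setP => y; rewrite in_set0; apply/negP => yX3.
have [exy|nxy] := boolP (e x y).
  have x24 : misses e x v2 v4 by apply: trace_misses xX1 _ _ _ _; diamond_mem.
  have y24 : misses e y v2 v4 by apply: trace_misses yX3 _ _ _ _; diamond_mem.
  by move: (misses_edge_nonadj e24 x24 y24); rewrite exy.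
have [ny1 _] := andP (X3_misses14 yX3).
have /andP[nx3 _] : misses e x v3 v4 by apply: X1X2Y1_misses34; rewrite !in_setU xX1.
have y_x1 : misses e y x v1 by rewrite /misses e_sym nxy.
have v3_x1 : misses e v3 x v1 by rewrite /misses e_sym nx3 e_sym.
have := misses_edge_nonadj (trace_adj xX1 (set11 v1)) y_x1 v3_x1.
by rewrite (trace_adj yX3 (set11 v3)).
Qed.

Lemma L0_sub_closed_nbhd : L0 \subset nbhd e v4 :|: [set v4].
Proof.
apply/subsetP => v; rewrite !inE -!orbA => /or4P[] /eqP->;
  by rewrite ?eqxx ?orbT // e_sym ?e14 ?e24 ?e34.
Qed.

Lemma L1_cover x :
  x \in L1 -> ~~ e v4 x -> x \in X1 :|: X2 :|: X3 :|: Y1 :|: Y2 :|: Z1 :|: Z2.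
Proof.
move=> xL1 n4x; have := trace_nbhd xL1.
rewrite !setIUr !setI1 !in_nbhd [e x v4]e_sym (negbTE n4x) setU0.
by case: (e x v1); case: (e x v2); case: (e x v3);
  rewrite ?set0U ?setU0 ?trace0 ?in_set0 // !in_setU => ->; rewrite ?orbT.
Qed.

Lemma diamond_cover :
  [set: T] = nbhd e v4 :|: [set v4] :|: X1 :|: X2 :|: X3 :|: Y1 :|: Y2
               :|: Z1 :|: Z2 :|: L2.
Proof.
apply/esym/setP => x; rewrite in_setT !in_setU.
have [xL0|xL0] := boolP (x \in L0).
  by have := subsetP L0_sub_closed_nbhd x xL0; rewrite in_setU => /orP[]->; rewrite ?orbT.
have [xL1|xL1] := boolP (x \in L1); last first.
  by rewrite [x \in L2]inE in_setU (negbTE xL0) (negbTE xL1) orbT.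
have [e4x|n4x] := boolP (e v4 x); first by rewrite in_nbhd e4x.
by have := L1_cover xL1 n4x; rewrite !in_setU -!orbA => /or4P[|||/or4P[]] ->;
  rewrite ?orbT.
Qed.

Lemma L1_classes_nonadj_L2 x y :
  x \in X1 :|: X2 :|: X3 :|: Y1 :|: Y2 :|: Z1 -> y \in L2 -> ~~ e x y.
Proof.
have [in1 in2 in3 in4] := diamond_in_L0.
move=> xX yL2; have xX34 : x \in X1 :|: X2 :|: Y1 -> ~~ e x y.
  move=> /X1X2Y1_misses34 x34; exact: misses_edge_nonadj e34 x34 (L2_misses yL2 in3 in4).
rewrite !in_setU -!orbA in xX; case/or4P: xX => [xX|xX|xX|/or3P[xX|xX|xX]].
- by apply: xX34; rewrite !in_setU xX.
- by apply: xX34; rewrite !in_setU xX orbT.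
- exact: misses_edge_nonadj e14 (X3_misses14 xX) (L2_misses yL2 in1 in4).
- by apply: xX34; rewrite !in_setU xX orbT.
- exact: misses_edge_nonadj e14 (Y2_misses14 xX) (L2_misses yL2 in1 in4).
- exact: misses_edge_nonadj e24 (Z1_misses24 xX) (L2_misses yL2 in2 in4).
Qed.

End Diamond.

Theorem lemma3p6 (T : finType) (e : rel T) (v1 v2 v3 v4 : T) :
  simple_graph e -> connected_graph e -> twoK2_free e ->
  induced_diamond e v1 v2 v3 v4 ->
  let L0 := L0 v1 v2 v3 v4 in
  let L1 := L1 e v1 v2 v3 v4 in
  let L2 := L2 e v1 v2 v3 v4 in
  let X1 := trace e v1 v2 v3 v4 [set v1] in
  let X2 := trace e v1 v2 v3 v4 [set v2] in
  let X3 := trace e v1 v2 v3 v4 [set v3] in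
  let Y1 := trace e v1 v2 v3 v4 [set v1; v2] in
  let Y2 := trace e v1 v2 v3 v4 [set v2; v3] in
  let Z1 := trace e v1 v2 v3 v4 [set v1; v3] in
  let Z2 := trace e v1 v2 v3 v4 [set v1; v2; v3] in
  [/\ [set: T] = nbhd e v4 :|: [set v4] :|: X1 :|: X2 :|: X3 :|: Y1 :|: Y2
                   :|: Z1 :|: Z2 :|: L2,
      X1 = set0 \/ X3 = set0,
      [/\ independent e (X1 :|: X2 :|: Y1), independent e Y2,
          independent e Z1 & independent e L2] &
      forall x y, x \in X1 :|: X2 :|: X3 :|: Y1 :|: Y2 :|: Z1 -> y \in L2 -> ~~ e x y].
Proof.
move=> [e_irr e_sym] _ e_2K2 [v_uniq /and5P[_ _ e34 e41 e24] n13]; cbv zeta.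
have e14 : e v1 v4 by rewrite e_sym.
have [_ in2 _ in4] := diamond_in_L0 v1 v2 v3 v4.
have independent_edge := independent_misses_edge e_irr e_sym e_2K2.
split.
- exact: diamond_cover.
- exact: X1_or_X3_empty.
- split.
  + exact: independent_edge e34 (X1X2Y1_misses34 v_uniq).
  + exact: independent_edge e14 (Y2_misses14 v_uniq).
  + exact: independent_edge e24 (Z1_misses24 v_uniq).
  + apply: independent_edge e24 _ => y yL2; exact: L2_misses yL2 in2 in4.
- exact: L1_classes_nonadj_L2.
Qed.
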